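(* Let $\mathcal{M} = \{0,1\}^n$ with $n$ even. Consider the following construction. $\mathsf{Gen}(w)$: let $a=[w]_1^{n/2}$ and $b=[w]_{n/2+1}^n$ (the first and second halves of $w$), viewed as elements of $\mathbb{F}_{2^{n/2}}$; select a uniformly random $i\in \mathbb{F}_{2^{n/2}}$; set $\sigma = [ia+b]_1^{v}$ and $R=[ia+b]_{v+1}^{n/2}$; output the key $R$ and the public string $P=(i,\sigma)$. $\mathsf{Rep}(w, P'=(i',\sigma'))$: with $a,b$ the halves of $w$ as before, if $\sigma'=[i'a+b]_1^{v}$ output $R'=[i'a+b]_{v+1}^{n/2}$, else output $\bot$. Setting $v = n/2 - \ell$, this construction is an $(m,\ell,0,\varepsilon)$-fuzzy extractor with post-application robustness $\delta$, for any $m,\ell,\varepsilon,\delta$ satisfying $\ell \leq m - n/2 -\log\frac{1}{\delta}$, as long as $m\geq n/2 + 2\log\frac{1}{\varepsilon}$.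
   Context: Notation: $[x]_i^j$ denotes the substring $x_i x_{i+1}\ldots x_j$; addition in $\mathbb{F}_{2^{n/2}}$ corresponds to bitwise XOR. An $(m,\ell,t,\varepsilon)$-fuzzy extractor is a pair $(\mathsf{Gen},\mathsf{Rep})$ such that $\mathsf{Gen}(w)$ outputs $R\in\{0,1\}^\ell$ and helper $P$; $\mathsf{Rep}(w',P)=R$ whenever the Hamming distance between $w$ and $w'$ is at most $t$; and for every $W$ with min-entropy ${\mathbf{H}}_\infty(W)\ge m$, the statistical distance between $(R,P)$ and $U_\ell\times P$ is at most $\varepsilon$. Post-application robustness $\delta$: for every distribution $W$ with min-entropy at least $m$ (here $w'=w$) and every (computationally unbounded) adversary $\mathcal{A}$, the probability that $\mathcal{A}$, given both $R$ and $P$ from $\mathsf{Gen}(w)$, outputs $\tilde P\ne P$ with $\mathsf{Rep}(w,\tilde P)\neq\bot$ is at most $\delta$. Logarithms are base 2. *)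

From HB Require Import structures.
From mathcomp Require Import all_boot all_order all_algebra.
From mathcomp Require Import reals exp.
Set Implicit Arguments.
Unset Strict Implicit.
Unset Printing Implicit Defensive.
Import Order.TTheory GRing.Theory Num.Theory.
Local Open Scope ring_scope.

Definition bitstring (n : nat) := {ffun 'I_n -> bool}.

Definition hamming n (x y : bitstring n) : nat := #|[set i | x i != y i]|.

Definition log2 {R : realType} (x : R) : R := ln x / ln 2.

Definition is_dist {R : realType} {T : finType} (p : T -> R) : Prop :=
  (forall x, 0 <= p x) /\ \sum_(x : T) p x = 1.

Definition Hinf {R : realType} {T : finType} (p : T -> R) : R :=
  - log2 (\big[Num.max/0]_(x : T) p x).

Definition SD {R : realType} {T : finType} (p q : T -> R) : R :=
  2^-1 * \sum_(x : T) `|p x - q x|.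

(** A (randomized) Gen is modelled as a deterministic function of the input
    and of a uniformly random seed s : S. *)
Section FE.
Variables (R : realType) (n l : nat) (S P : finType).
Variable gen : bitstring n -> S -> bitstring l * P.
Variable rep : bitstring n -> P -> option (bitstring l).

Definition joint_RP (W : bitstring n -> R) (rp : bitstring l * P) : R :=
  \sum_(w : bitstring n) \sum_(s : S)
     (W w / #|S|%:R) * (gen w s == rp)%:R.

Definition ideal_RP (W : bitstring n -> R) (rp : bitstring l * P) : R :=
  ((2%:R ^+ l)^-1) * \sum_(r : bitstring l) joint_RP W (r, rp.2).

Definition fuzzy_extractor (m : R) (t : nat) (eps : R) : Prop :=
  (forall (w w' : bitstring n) (s : S), (hamming w w' <= t)%N ->
      rep w' (gen w s).2 = Some (gen w s).1)
  /\ (forall W : bitstring n -> R, is_dist W -> m <= Hinf W ->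
      SD (joint_RP W) (ideal_RP W) <= eps).

(** Post-application robustness delta: every computationally unbounded
    (possibly randomized) adversary A, given (R, P), outputs P~ with
    distribution A R P; success = P~ <> P and Rep(w, P~) <> bot. *)
Definition post_app_robust (m : R) (delta : R) : Prop :=
  forall W : bitstring n -> R, is_dist W -> m <= Hinf W ->
  forall A : bitstring l -> P -> P -> R,
    (forall r p, is_dist (A r p)) ->
    \sum_(w : bitstring n) \sum_(s : S)
      (W w / #|S|%:R) *
      \sum_(p' : P) A (gen w s).1 (gen w s).2 p' *
         ((p' != (gen w s).2) && (rep w p' != None))%:R
    <= delta.
End FE.

(** The construction, with n = 2 (v + l), i.e. n/2 = v + l, v = n/2 - l. *)
Definition half1 k (w : bitstring (k + k)) : bitstring k :=
  [ffun j => w (lshift k j)].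
Definition half2 k (w : bitstring (k + k)) : bitstring k :=
  [ffun j => w (rshift k j)].
Definition sig_part v l (s : bitstring (v + l)) : bitstring v :=
  [ffun j => s (lshift l j)].
Definition key_part v l (s : bitstring (v + l)) : bitstring l :=
  [ffun j => s (rshift v j)].

Section Construction.
Variables (F : finFieldType) (v l : nat).
Variables (phi : bitstring (v + l) -> F) (psi : F -> bitstring (v + l)).

Definition gen_c (w : bitstring ((v + l) + (v + l))) (i : F)
  : bitstring l * (F * bitstring v) :=
  let s := psi (i * phi (half1 w) + phi (half2 w)) in
  (key_part s, (i, sig_part s)).

Definition rep_c (w : bitstring ((v + l) + (v + l))) (P' : F * bitstring v)
  : option (bitstring l) :=
  let s := psi (P'.1 * phi (half1 w) + phi (half2 w)) in
  if sig_part s == P'.2 then Some (key_part s) else None.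
End Construction.

From HB Require Import structures.
From mathcomp Require Import all_boot all_order all_algebra.
From mathcomp Require Import reals exp.
From mathcomp Require Import ring lra zify.
Import Order.TTheory GRing.Theory Num.Theory.
Local Open Scope ring_scope.
Set Implicit Arguments.
Unset Strict Implicit.
Unset Printing Implicit Defensive.

(* The family i |-> i a + b over F is pairwise independent: two distinct inputs
   collide for at most one seed i, and the values at two distinct seeds determine
   (a, b).  Extraction is the leftover hash lemma: the collision probability of
   (R, P) = Gen(W) is at most |F|^-1 (|F|^-1 + 2^-m), so by Cauchy-Schwarz its
   L1 distance to uniform is at most sqrt (|F| 2^-m) <= eps.  For robustness, fix
   the seed i and the value y = i a + b seen by the adversary: a forgery (j, s')
   can only be accepted if j != i, and the inputs accepting it all share y and
   the tag [j a + b]_1^v, so they are told apart by the key [j a + b]_{v+1}^{n/2};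
   there are at most 2^l of them, each of probability at most 2^-m.  Summing over
   the |F| seeds gives |F| 2^l 2^-m <= delta. *)

Lemma sumr_indicator (R : pzSemiRingType) (T : finType) (a : T) (f : T -> R) :
  \sum_x (a == x)%:R * f x = f a.
Proof.
rewrite (bigD1 a) //= eqxx mul1r big1 ?addr0 // => x /negbTE.
by rewrite eq_sym => ->; rewrite mul0r.
Qed.

Lemma sumr_indicator_card (R : pzSemiRingType) (T : finType) (P : pred T) :
  \sum_x (P x)%:R = #|P|%:R :> R.
Proof.
rewrite -sum1_card natr_sum [RHS]big_mkcond.
by apply: eq_bigr => x _; rewrite unfold_in; case: (P x).
Qed.

Lemma sum_norm_sqr_le (R : realFieldType) (T : finType) (f : T -> R) :
  (\sum_x `|f x|) ^+ 2 <= #|T|%:R * \sum_x f x ^+ 2.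
Proof.
have amgm x y : `|f x| * `|f y| <= (f x ^+ 2 + f y ^+ 2) / 2.
  have := sqr_ge0 (`|f x| - `|f y|).
  rewrite sqrrB !real_normK ?num_real // mulr2n; lra.
have -> : (\sum_x `|f x|) ^+ 2 = \sum_x \sum_y `|f x| * `|f y|.
  by rewrite expr2 mulr_suml; apply: eq_bigr => x _; rewrite mulr_sumr.
apply: le_trans (ler_sum _ (fun x _ => ler_sum _ (fun y _ => amgm x y))) _.
under eq_bigr do rewrite -mulr_suml big_split /= sumr_const.
rewrite -mulr_suml big_split /= sumrMnl sumr_const mulr_natl; lra.
Qed.

Lemma sum_dist_uniform_sqr (R : realFieldType) (T : finType) (p : T -> R) :
  \sum_x p x = 1 ->
  (\sum_x `|p x - #|T|%:R^-1|) ^+ 2 <= #|T|%:R * \sum_x p x ^+ 2 - 1.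
Proof.
move=> p1.
have c0 : #|T|%:R != 0 :> R.
  case: (pickP (@predT T)) => [x _|T0].
    by rewrite pnatr_eq0 -lt0n; apply/card_gt0P; exists x.
  have sum0 : \sum_x p x = 0 by rewrite big1 // => x; have := T0 x.
  by move/eqP: p1; rewrite sum0 eq_sym oner_eq0.
apply: le_trans (sum_norm_sqr_le _) _.
under eq_bigr do rewrite sqrrB.
rewrite !big_split /= sumrN sumrMnl -mulr_suml p1 sumr_const.
rewrite le_eqVlt; apply/orP; left; apply/eqP.
by rewrite -mulr_natl; field.
Qed.

Section Log2.
Variable R : realType.

Lemma log2V (x : R) : 0 < x -> log2 x^-1 = - log2 x.
Proof. by move=> x0; rewrite /log2 lnV ?posrE // mulNr. Qed.

Lemma log2Xn (x : R) k : 0 < x -> log2 (x ^+ k) = log2 x *+ k.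
Proof. by move=> x0; rewrite /log2 lnXn // mulrnAl. Qed.

Lemma pow2M_le_of_log2 k (x y : R) :
  0 < y -> (0 < x -> k%:R + log2 x <= log2 y) -> 2 ^+ k * x <= y.
Proof.
move=> y0 hxy; have [x0|x0] := lerP x 0.
  by apply: le_trans (ltW y0); rewrite pmulr_rle0 ?exprn_gt0.
have L0 : 0 < ln (2 : R) by rewrite ln_gt0 // ltr1n.
rewrite -ler_ln ?posrE ?mulr_gt0 ?exprn_gt0 // lnM ?posrE ?exprn_gt0 // lnXn //.
have := hxy x0; rewrite /log2 -(ler_pM2r L0) mulrDl !divfK ?gt_eqF //.
by rewrite mulr_natl.
Qed.

End Log2.

Lemma sumr_bitstring_const (R : pzSemiRingType) k (u : R) :
  \sum_(r : bitstring k) u = 2%:R ^+ k * u.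
Proof. by rewrite sumr_const card_ffun card_bool card_ord -natrX mulr_natl. Qed.

Section FuzzyExtractorDistributions.
Variables (R : realType) (n l : nat) (S P : finType).
Variables (gen : bitstring n -> S -> bitstring l * P) (W : bitstring n -> R).

Let J := joint_RP gen W.

Lemma sum_joint_RP : (0 < #|S|)%N -> \sum_x J x = \sum_w W w.
Proof.
move=> S0; rewrite /J /joint_RP exchange_big; apply: eq_bigr => w _.
rewrite exchange_big /= (eq_bigr (fun _ => W w / #|S|%:R)); last first.
  by move=> s _; under eq_bigr do rewrite mulrC; rewrite sumr_indicator.
by rewrite sumr_const -[(W w / _) *+ _]mulr_natr divfK // pnatr_eq0 -lt0n.
Qed.

Lemma sum_joint_RP_sqr :
  \sum_x J x ^+ 2 = \sum_w \sum_s (W w / #|S|%:R) * J (gen w s).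
Proof.
under eq_bigr do rewrite expr2 {1}/J /joint_RP mulr_suml.
rewrite exchange_big; apply: eq_bigr => w _.
under eq_bigr do rewrite mulr_suml.
rewrite exchange_big; apply: eq_bigr => s _.
by under eq_bigr do rewrite -mulrA; rewrite -mulr_sumr sumr_indicator.
Qed.

Lemma sum_dist_ideal_RP_le (u : R) :
  \sum_x `|u - ideal_RP gen W x| <= \sum_x `|J x - u|.
Proof.
have c0 : 0 < (2%:R ^+ l : R) by rewrite exprn_gt0 // ltr0n.
have avg x : `|u - ideal_RP gen W x| <= (2%:R ^+ l)^-1 * \sum_r `|J (r, x.2) - u|.
  rewrite /ideal_RP -/J -{1}(mulKf (lt0r_neq0 c0) u) -sumr_bitstring_const.
  rewrite -mulrBr -sumrB normrM ger0_norm ?invr_ge0 ?exprn_ge0 //.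
  rewrite ler_pM2l ?invr_gt0 //; apply: le_trans (ler_norm_sum _ _ _) _.
  by apply: ler_sum => r _; rewrite distrC.
apply: le_trans (ler_sum _ (fun x _ => avg x)) _.
rewrite -(pair_bigA _ (fun _ p => _ * \sum_r0 `|J (r0, p) - u|)) /=.
rewrite sumr_bitstring_const -mulr_sumr mulVKf ?gt_eqF //.
by rewrite exchange_big (pair_bigA _ (fun r p => `|J (r, p) - u|)).
Qed.

Lemma SD_joint_ideal_le (u : R) :
  SD J (ideal_RP gen W) <= \sum_x `|J x - u|.
Proof.
rewrite /SD; apply: le_trans (_ : 2^-1 * (\sum_x `|J x - u| + \sum_x `|J x - u|) <= _).
  rewrite ler_pM2l ?invr_gt0 //; apply: le_trans (lerD (lexx _) (sum_dist_ideal_RP_le u)).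
  by rewrite -big_split /=; apply: ler_sum => x _; apply: ler_distD.
lra.
Qed.

End FuzzyExtractorDistributions.

Lemma sum_dist_mul_le (R : realType) (T : finType) (p f : T -> R) (b : R) :
  is_dist p -> (forall x, f x <= b) -> \sum_x p x * f x <= b.
Proof.
move=> [p0 p1] fb; apply: le_trans (_ : \sum_x p x * b <= _).
  by apply: ler_sum => x _; rewrite ler_wpM2l.
by rewrite -mulr_suml p1 mul1r.
Qed.

Lemma eq_bitstring_split a b (x y : bitstring (a + b)) :
  [ffun j => x (lshift b j)] = [ffun j => y (lshift b j)] ->
  [ffun j => x (rshift a j)] = [ffun j => y (rshift a j)] -> x = y.
Proof.
move=> eL eR; apply/ffunP => i; case: (split_ordP i) => j ->.
  by have := congr1 (fun f : bitstring a => f j) eL; rewrite !ffunE.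
by have := congr1 (fun f : bitstring b => f j) eR; rewrite !ffunE.
Qed.

Section Construction.
Variables (F : finFieldType) (v l : nat).
Variables (phi : bitstring (v + l) -> F) (psi : F -> bitstring (v + l)).
Hypotheses (phiK : cancel phi psi) (psiK : cancel psi phi).

Let phi_inj := can_inj phiK.
Let psi_inj := can_inj psiK.

Local Notation bits := (bitstring ((v + l) + (v + l))).
Local Notation gen := (gen_c phi psi).
Local Notation rep := (rep_c phi psi).

Definition hash_c (w : bits) (i : F) : F := i * phi (half1 w) + phi (half2 w).

Lemma card_F : #|F| = (2 ^ (v + l))%N.
Proof. by rewrite (bij_eq_card (Bijective psiK phiK)) card_ffun card_bool card_ord. Qed.

Lemma eq_gen_c w w' i i' :
  (gen w' i' == gen w i) = (i' == i) && (hash_c w' i' == hash_c w i).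
Proof.
apply/eqP/andP; last by case=> /eqP -> /eqP eh; rewrite /gen_c -/(hash_c _ _) eh.
move=> [= ek ei es]; move: ek es; rewrite ei => ek es; split=> //.
by apply/eqP/psi_inj; apply: eq_bitstring_split es ek.
Qed.

Lemma rep_c_neq_None w p :
  (rep w p != None) = (sig_part (psi (hash_c w p.1)) == p.2).
Proof. by rewrite /rep_c -/(hash_c _ _); case: ifP. Qed.

Lemma rep_c_gen_c w i : rep w (gen w i).2 = Some (gen w i).1.
Proof. by rewrite /rep_c /gen_c /= eqxx. Qed.

Lemma hash_c_inj2 w w' i j : i != j ->
  hash_c w i = hash_c w' i -> hash_c w j = hash_c w' j -> w = w'.
Proof.
rewrite /hash_c => ij ei ej.
set a := phi (half1 w) in ei ej *; set a' := phi (half1 w') in ei ej *.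
set b := phi (half2 w) in ei ej *; set b' := phi (half2 w') in ei ej *.
have ea : a = a'.
  have : (i - j) * (a - a') = 0.
    have -> : (i - j) * (a - a') = i * a + b - (i * a' + b') - (j * a + b - (j * a' + b')).
      by ring.
    by rewrite ei ej !subrr.
  by move/eqP; rewrite mulf_eq0 !subr_eq0 (negbTE ij) => /eqP.
have eb : b = b' by move: ei; rewrite ea => /addrI.
by apply: eq_bitstring_split; apply: phi_inj.
Qed.

Lemma card_hash_c_collision w w' :
  w' != w -> (#|[pred i | hash_c w' i == hash_c w i]| <= 1)%N.
Proof.
move=> w'w; apply/card_le1_eqP => i j; rewrite !inE => /eqP ei /eqP ej.
apply/eqP; apply: contraT => ij.
by move: w'w; rewrite (hash_c_inj2 ij ej ei) eqxx.
Qed.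

(* On this set the tag at [j] is fixed, so [hash_c_inj2] makes the key at [j] injective. *)
Lemma card_hash_c_forge (i j y : F) (sg : bitstring v) : j != i ->
  (#|[pred w | (hash_c w i == y) && (sig_part (psi (hash_c w j)) == sg)]| <= 2 ^ l)%N.
Proof.
move=> ji; have := leq_card_in (fun w => key_part (psi (hash_c w j)))
  [pred w | (hash_c w i == y) && (sig_part (psi (hash_c w j)) == sg)].
rewrite card_ffun card_bool card_ord; apply.
move=> w1 w2; rewrite !inE => /andP[/eqP h1 /eqP s1] /andP[/eqP h2 /eqP s2] ek.
have es : sig_part (psi (hash_c w1 j)) = sig_part (psi (hash_c w2 j)) by rewrite s1 s2.
have ej : hash_c w1 j = hash_c w2 j := psi_inj (eq_bitstring_split es ek).
by apply: hash_c_inj2 ji ej _; rewrite h1 h2.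
Qed.

Section Distributions.
Variables (R : realType) (W : bits -> R).
Hypothesis Wd : is_dist W.

Local Notation K := (#|F|%:R : R).
Local Notation M := (\big[Num.max/0]_w W w).
Local Notation J := (joint_RP gen W).

Let K_gt0 : 0 < K.
Proof. by rewrite ltr0n card_F expn_gt0. Qed.

Let W_ge0 w : 0 <= W w.
Proof. by case: Wd. Qed.

Let W_le_max w : W w <= M.
Proof. exact: le_bigmax. Qed.

Let WK_ge0 w : 0 <= W w / K.
Proof. by rewrite divr_ge0 ?W_ge0 ?(ltW K_gt0). Qed.

Lemma joint_RP_gen_c w i :
  J (gen w i) = \sum_w' (W w' / K) * (hash_c w' i == hash_c w i)%:R.
Proof.
apply: eq_bigr => w' _; rewrite (bigD1 i) //= big1 ?addr0 => [|i' i'i].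
  by rewrite eq_gen_c eqxx.
by rewrite eq_gen_c (negbTE i'i) mulr0.
Qed.

Lemma sum_hash_c_collision w w' :
  \sum_i ((hash_c w' i == hash_c w i)%:R : R) <= 1 + K * (w' == w)%:R.
Proof.
rewrite (sumr_indicator_card R [pred i | hash_c w' i == hash_c w i]).
have [->|w'w] := eqVneq w' w.
  by rewrite mulr1 ler_wpDl // ler_nat max_card.
by rewrite mulr0 addr0 lern1 card_hash_c_collision.
Qed.

Lemma sum_joint_RP_gen_c w : \sum_i J (gen w i) <= K^-1 + W w.
Proof.
under eq_bigr do rewrite joint_RP_gen_c.
rewrite exchange_big /=; under eq_bigr do rewrite -mulr_sumr.
apply: le_trans (_ : \sum_w' W w' / K * (1 + K * (w' == w)%:R) <= _).
  by apply: ler_sum => w' _; apply: ler_wpM2l; [exact: WK_ge0 | exact: sum_hash_c_collision].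
under eq_bigr do rewrite mulrDr mulr1 mulrA divfK ?gt_eqF // [_ * (_ == _)%:R]mulrC eq_sym.
rewrite big_split /= -mulr_suml sumr_indicator; case: Wd => _ ->.
by rewrite mul1r.
Qed.

Lemma sum_joint_RP_sqr_le : \sum_x J x ^+ 2 <= (K^-1 + M) / K.
Proof.
rewrite sum_joint_RP_sqr; apply: le_trans (_ : \sum_w W w / K * (K^-1 + M) <= _).
  apply: ler_sum => w _; rewrite -mulr_sumr; apply: ler_wpM2l; first exact: WK_ge0.
  by apply: le_trans (sum_joint_RP_gen_c w) _; rewrite lerD2l.
by rewrite -mulr_suml -mulr_suml; case: Wd => _ ->; rewrite mul1r mulrC.
Qed.

Lemma card_key_helper : #|{: bitstring l * (F * bitstring v)}|%:R = K ^+ 2 :> R.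
Proof.
rewrite !card_prod !card_ffun !card_bool !card_ord card_F -natrX -!expnD -expnM.
by congr (2 ^ _)%:R; lia.
Qed.

Lemma extraction_sqr_le : (\sum_x `|J x - (K ^+ 2)^-1|) ^+ 2 <= K * M.
Proof.
have J1 : \sum_x J x = 1.
  by rewrite sum_joint_RP ?card_F ?expn_gt0 //; case: Wd.
rewrite -card_key_helper; apply: le_trans (sum_dist_uniform_sqr J1) _; rewrite card_key_helper.
apply: le_trans (_ : K ^+ 2 * ((K^-1 + M) / K) - 1 <= _).
  by rewrite lerD2r ler_pM2l ?exprn_gt0 // sum_joint_RP_sqr_le.
have -> : K ^+ 2 * ((K^-1 + M) / K) - 1 = K * M by field; rewrite gt_eqF.
exact: lexx.
Qed.

Lemma sum_forgery_le (i y : F) (p' : F * bitstring v) :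
  \sum_w (hash_c w i == y)%:R *
    (W w / K * ((p' != (i, sig_part (psi y))) && (rep w p' != None))%:R)
  <= M / K * 2 ^+ l.
Proof.
have M0 : 0 <= M := le_trans (W_ge0 [ffun=> false]) (W_le_max _).
have MK0 : 0 <= M / K := divr_ge0 M0 (ltW K_gt0).
(* A forgery [(i, sg)] reusing the seed is never accepted. *)
case: p' => j sg; have [->|ji] := eqVneq j i.
  rewrite big1 => [|w _]; first exact: mulr_ge0 MK0 (exprn_ge0 l (ler0n R 2)).
  have [hy|] := eqVneq (hash_c w i) y; last by rewrite mul0r.
  rewrite rep_c_neq_None /= hy; have [<-|_] := eqVneq (sig_part (psi y)) sg.
    by rewrite !eqxx /= !(mulr0n, mulr0).
  by rewrite andbF !(mulr0n, mulr0).
have indicator_le (b1 b2 b3 : bool) x : 0 <= x <= M / K ->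
    b1%:R * (x * (b2 && b3)%:R) <= M / K * (b1 && b3)%:R.
  by case/andP=> x0 xM; case: b1; case: b2; case: b3;
    rewrite /= ?(mul0r, mulr0, mul1r, mulr1, mulr0n, mulr1n).
apply: le_trans (_ : \sum_w M / K *
    ((hash_c w i == y) && (sig_part (psi (hash_c w j)) == sg))%:R <= _).
  apply: ler_sum => w _; rewrite rep_c_neq_None; apply: indicator_le.
  by rewrite WK_ge0 /= ler_pM2r ?invr_gt0 ?W_le_max.
rewrite -mulr_sumr sumr_indicator_card; apply: ler_wpM2l => //.
by rewrite -natrX ler_nat card_hash_c_forge.
Qed.

(* The adversary's view [(R, P)] depends on [w] only through [y = hash_c w i]. *)
Lemma robust_seed_le (A : bitstring l -> F * bitstring v -> F * bitstring v -> R) i :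
  (forall r p, is_dist (A r p)) ->
  \sum_w (W w / K) * \sum_p' A (gen w i).1 (gen w i).2 p' *
      ((p' != (gen w i).2) && (rep w p' != None))%:R
  <= M * 2 ^+ l.
Proof.
move=> Ad; pose G y := (key_part (psi y), (i, sig_part (psi y))).
pose T y w := W w / K * \sum_p' A (G y).1 (G y).2 p' *
  ((p' != (G y).2) && (rep w p' != None))%:R.
rewrite (eq_bigr (fun w => \sum_y (hash_c w i == y)%:R * T y w)); last first.
  by move=> w _; rewrite sumr_indicator.
rewrite exchange_big /=; apply: le_trans (_ : \sum_(y : F) M / K * 2 ^+ l <= _).
  apply: ler_sum => y _; apply: le_trans (_ : \sum_p' A (G y).1 (G y).2 p' *
      \sum_w (hash_c w i == y)%:R *
        (W w / K * ((p' != (G y).2) && (rep w p' != None))%:R) <= _).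
    rewrite le_eqVlt; apply/orP; left; apply/eqP.
    rewrite /T; under eq_bigr do rewrite mulr_sumr mulr_sumr.
    rewrite exchange_big; apply: eq_bigr => p' _; rewrite mulr_sumr.
    by apply: eq_bigr => w _; ring.
  by apply: sum_dist_mul_le => // p'; apply: sum_forgery_le.
by rewrite sumr_const -[(_ * _) *+ _]mulr_natl mulrA mulrCA divff ?gt_eqF ?mulr1.
Qed.

Lemma robust_success_le (A : bitstring l -> F * bitstring v -> F * bitstring v -> R) :
  (forall r p, is_dist (A r p)) ->
  \sum_w \sum_i (W w / K) * \sum_p' A (gen w i).1 (gen w i).2 p' *
      ((p' != (gen w i).2) && (rep w p' != None))%:R
  <= K * M * 2 ^+ l.
Proof.
move=> Ad; rewrite exchange_big /=.
apply: le_trans (ler_sum _ (fun i _ => robust_seed_le i Ad)) _.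
by rewrite sumr_const -[(M * _) *+ _]mulr_natl mulrA.
Qed.

End Distributions.
End Construction.

Lemma hamming_eq0 n (x y : bitstring n) : hamming x y = 0%N -> x = y.
Proof.
move=> /cards0_eq dxy; apply/ffunP => i; apply/eqP; apply: contraT => xy.
have : i \in [set i | x i != y i] by rewrite inE.
by rewrite dxy inE.
Qed.

Theorem theorem1 (R : realType) (F : finFieldType) (v l : nat)
  (phi : bitstring (v + l) -> F) (psi : F -> bitstring (v + l))
  (phiK : cancel phi psi) (psiK : cancel psi phi)
  (phi_xor : forall x y : bitstring (v + l),
      phi [ffun j => addb (x j) (y j)] = phi x + phi y)
  (m eps delta : R) :
  0 < eps -> 0 < delta ->
  l%:R <= m - (v + l)%:R - log2 delta^-1 ->
  (v + l)%:R + 2 * log2 eps^-1 <= m ->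
  fuzzy_extractor (gen_c phi psi) (rep_c phi psi) m 0 eps /\
  post_app_robust (gen_c phi psi) (rep_c phi psi) m delta.
Proof.
move=> eps_gt0 delta_gt0 hl heps.
have cardK : #|F|%:R = 2 ^+ (v + l) :> R by rewrite (card_F phiK psiK) natrX.
split; [split|] => [w w' i | W Wd hm | W Wd hm A Ad].
- by rewrite leqn0 => /eqP /hamming_eq0 <-; apply: rep_c_gen_c.
- apply: le_trans (SD_joint_ideal_le _ _ (#|F|%:R ^+ 2)^-1) _.
  rewrite -(ler_pXn2r (isT : (0 < 2)%N)) ?nnegrE ?sumr_ge0 ?(ltW eps_gt0) //.
  apply: le_trans (extraction_sqr_le phiK psiK Wd) _; rewrite cardK.
  apply: pow2M_le_of_log2; first by rewrite exprn_gt0.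
  move=> _; rewrite log2Xn // mulr2n /Hinf in hm *; have := log2V eps_gt0; lra.
- apply: le_trans (robust_success_le phiK psiK Wd Ad) _.
  rewrite cardK mulrAC -exprD; apply: pow2M_le_of_log2 => // _.
  rewrite natrD /Hinf in hm *; have := log2V delta_gt0; lra.
Qed.
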